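(* Let $M$ be a symmetric homogeneous stable mean having a symmetric asymptotic expansion with coefficients $(a_n)_{n\ge0}$. Then $a_0=1$, $a_1\in\mathbb R$ is arbitrary (free), and for $m\ge2$ $$a_m=\frac{2^{2m-1}}{2^{2m-2}-1}\Big(\frac12\sum_{n=1}^{m-1}a_n\sum_{k=0}^{2m-2n}P[k,2n,\mathbf g]P[2m-2n-k,-2n+1,\mathbf h]+\sum_{n=1}^{m-1}a_n\sum_{k=0}^{m-n}P[k,2n,\mathbf d]P[m-n-k,-2n+1,\mathbf s]\Big),$$ where $\mathbf g=(1,a_1,0,a_2,0,\ldots)$, $\mathbf h=(2,-1,a_1,0,a_2,0,\ldots)$, and $\mathbf d,\mathbf s$ are given by $d_m=-\frac12\sum_{n=0}^m a_n\sum_{k=0}^{2m+1-2n}P[k,2n,\mathbf g]P[2m+1-2n-k,-2n+1,\mathbf h]$ and $s_m=\frac12\sum_{n=0}^m a_n\sum_{k=0}^{2m-2n}P[k,2n,\mathbf g]P[2m-2n-k,-2n+1,\mathbf h]$. In particular all $a_m$, $m\ge2$, are determined by $a_1$ (the right-hand side involves only $a_1,\dots,a_{m-1}$).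
   Context: A bi-variate mean is $M:(0,\infty)^2\to(0,\infty)$ with $\min(s,t)\le M(s,t)\le\max(s,t)$; symmetric: $M(s,t)=M(t,s)$; homogeneous: $M(\lambda s,\lambda t)=\lambda M(s,t)$. $M$ is stable if $M(s,t)=M\big(M(s,M(s,t)),M(M(s,t),t)\big)$ for all $s,t>0$. $M$ has a symmetric asymptotic expansion with coefficients $(a_n)$ if for every fixed real $t$ and every $N\ge0$, $M(x-t,x+t)=\sum_{n=0}^Na_nt^{2n}x^{-2n+1}+o(x^{-2N+1})$ as $x\to\infty$. For a sequence $\mathbf b$ with $b_0\ne0$, $r\in\mathbb R$: $P[0,r,\mathbf b]=b_0^r$, $P[n,r,\mathbf b]=\frac1{nb_0}\sum_{k=1}^n(k(1+r)-n)b_kP[n-k,r,\mathbf b]$ ($n\ge1$), the coefficient of $z^n$ in $(\sum_jb_jz^j)^r$. In $\mathbf g$: $g_0=1$, $g_{2k-1}=a_k$, $g_{2k}=0$; in $\mathbf h$: $h_0=2$, $h_1=-1$, $h_{2k}=a_k$, $h_{2k+1}=0$ ($k\ge1$). *)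

From Stdlib Require Import Reals Lra Lia.
From Coquelicot Require Import Coquelicot.
Open Scope R_scope.

(* sum_range lo hi f = sum_{k=lo}^{hi} f k  (empty, = 0, when hi < lo) *)
Fixpoint sumR (m : nat) (f : nat -> R) : R :=
  match m with
  | O => 0
  | S m' => sumR m' f + f m'
  end.

Definition sum_range (lo hi : nat) (f : nat -> R) : R :=
  sumR (S hi - lo) (fun j => f (lo + j)%nat).

Fixpoint Pfuel (fuel n : nat) (r : R) (b : nat -> R) : R :=
  match fuel with
  | O => Rpower (b O) r
  | S f =>
    match n with
    | O => Rpower (b O) r
    | S _ =>
      / (INR n * b O) *
      sum_range 1 n (fun k => (INR k * (1 + r) - INR n) * b k * Pfuel f (n - k) r b)
    end
  end.

Definition P (n : nat) (r : R) (b : nat -> R) : R := Pfuel n n r b.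

Definition gseq (a : nat -> R) (j : nat) : R :=
  match j with
  | O => 1
  | _ => if Nat.odd j then a (Nat.div2 (S j)) else 0
  end.

Definition hseq (a : nat -> R) (j : nat) : R :=
  match j with
  | O => 2
  | S O => -1
  | _ => if Nat.even j then a (Nat.div2 j) else 0
  end.

Definition dseq (a : nat -> R) (m : nat) : R :=
  - / 2 * sum_range 0 m (fun n => a n *
      sum_range 0 (2 * m + 1 - 2 * n) (fun k =>
        P k (2 * INR n) (gseq a) * P (2 * m + 1 - 2 * n - k) (- 2 * INR n + 1) (hseq a))).

Definition sseq (a : nat -> R) (m : nat) : R :=
  / 2 * sum_range 0 m (fun n => a n *
      sum_range 0 (2 * m - 2 * n) (fun k =>
        P k (2 * INR n) (gseq a) * P (2 * m - 2 * n - k) (- 2 * INR n + 1) (hseq a))).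

Definition is_mean (M : R -> R -> R) : Prop :=
  forall s t, 0 < s -> 0 < t -> Rmin s t <= M s t <= Rmax s t.

Definition symmetric_mean (M : R -> R -> R) : Prop :=
  forall s t, 0 < s -> 0 < t -> M s t = M t s.

Definition homogeneous_mean (M : R -> R -> R) : Prop :=
  forall l s t, 0 < l -> 0 < s -> 0 < t -> M (l * s) (l * t) = l * M s t.

Definition stable_mean (M : R -> R -> R) : Prop :=
  forall s t, 0 < s -> 0 < t ->
    M s t = M (M s (M s t)) (M (M s t) t).

Definition has_sym_asymp_expansion (M : R -> R -> R) (a : nat -> R) : Prop :=
  forall (t : R) (N : nat),
    is_lim
      (fun x => (M (x - t) (x + t)
                 - sum_range 0 N (fun n => a n * t ^ (2 * n) * powerRZ x (1 - 2 * Z.of_nat n)))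
                / powerRZ x (1 - 2 * Z.of_nat N))
      p_infty 0.

(* Put f(w) = M(1 - w, 1 + w) ([profile]). Homogeneity turns the expansion of M(x - t, x + t)
   into f(w) = sum_n a_n w^(2n) + o(w^(2N)) as w -> 0+, and writes every mean as
   M(s, t) = (s + t)/2 f((t - s)/(s + t)). Applied to the stability identity at (1 - u, 1 + u),
   this expresses the two inner means, and then the outer one, as lam H(u) f(u G(u) / H(u))
   with G, H admitting expansions at 0+ (coefficients g, h for the inner means, d, s for the
   outer one). Expanding such a composition only needs the powers G^(2n) H^(1-2n), whose
   coefficients are the P[k, r, b]: the recursion defining P solves b (z Q') = r (z b') Q,
   the differential equation of Q = b^r. Uniqueness of expansions then gives
   a_m = sum_(n <= m) a_n [d^(2n) s^(1-2n)]_(m-n); the terms n = 0 and n = m still contain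
   a_m (through s_m and d_0^(2m) = 4^(-m)), and solving for a_m yields the formula. *)

From Stdlib Require Import Reals Lra Lia FunctionalExtensionality.
From Coquelicot Require Import Coquelicot.
Open Scope R_scope.

Lemma sumR_ext_lt m f g : (forall k, (k < m)%nat -> f k = g k) -> sumR m f = sumR m g.
Proof.
  induction m; simpl; intros H; [reflexivity|].
  rewrite IHm, H by first [lia | intros; apply H; lia]. reflexivity.
Qed.

Lemma sumR_ext m f g : (forall k, f k = g k) -> sumR m f = sumR m g.
Proof. intros H; apply sumR_ext_lt; auto. Qed.

Lemma sumR_Sl m f : sumR (S m) f = f O + sumR m (fun j => f (S j)).
Proof. induction m; simpl in *; [ring|]. rewrite IHm; ring. Qed.

Lemma sumR_plus m f g : sumR m (fun k => f k + g k) = sumR m f + sumR m g.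
Proof. induction m; simpl; [ring|]. rewrite IHm; ring. Qed.

Lemma sumR_scal_l m x f : sumR m (fun k => x * f k) = x * sumR m f.
Proof. induction m; simpl; [ring|]. rewrite IHm; ring. Qed.

Lemma sumR_scal_r m x f : sumR m (fun k => f k * x) = sumR m f * x.
Proof. induction m; simpl; [ring|]. rewrite IHm; ring. Qed.

Lemma sumR_opp m f : sumR m (fun k => - f k) = - sumR m f.
Proof. induction m; simpl; [ring|]. rewrite IHm; ring. Qed.

Lemma sumR_eq_0 m f : (forall k, (k < m)%nat -> f k = 0) -> sumR m f = 0.
Proof.
  induction m; simpl; intros H; [reflexivity|].
  rewrite IHm, H by first [lia | intros; apply H; lia]. ring.
Qed.

Lemma sumR_zero_tail m m' f : (m <= m')%nat ->
  (forall k, (m <= k < m')%nat -> f k = 0) -> sumR m' f = sumR m f.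
Proof.
  induction 1 as [|m' Hle IH]; intros H; [reflexivity|].
  simpl. rewrite IH, H by first [lia | intros; apply H; lia]. ring.
Qed.

Lemma sumR_singleton N i F : (i < N)%nat ->
  (forall n, (n < N)%nat -> n <> i -> F n = 0) -> sumR N F = F i.
Proof.
  intros Hi H. rewrite (sumR_zero_tail (S i) N) by (auto; intros; apply H; lia).
  simpl. rewrite sumR_eq_0 by (intros; apply H; lia). ring.
Qed.

Lemma sumR_reverse m f : sumR m f = sumR m (fun k => f (m - 1 - k)%nat).
Proof.
  induction m; [reflexivity|].
  rewrite (sumR_Sl m (fun k => f (S m - 1 - k)%nat)). simpl sumR at 1.
  rewrite IHm, Rplus_comm.
  replace (S m - 1 - 0)%nat with m by lia.
  f_equal. apply sumR_ext; intros k. f_equal. lia.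
Qed.

Lemma sumR_double m F : sumR (2 * m) F = sumR m (fun i => F (2 * i)%nat + F (S (2 * i))).
Proof.
  induction m; [reflexivity|].
  replace (2 * S m)%nat with (S (S (2 * m))) by lia. cbn [sumR]. rewrite IHm. ring.
Qed.

Lemma sumR_first_last m F : (1 <= m)%nat ->
  sumR (S m) F = F O + sumR (m - 1) (fun j => F (S j)) + F m.
Proof.
  intros H. rewrite sumR_Sl. replace m with (S (m - 1)) at 1 by lia.
  simpl sumR. replace (S (m - 1)) with m by lia. ring.
Qed.

Lemma sum_range_1 n F : sum_range 1 n F = sumR n (fun j => F (S j)).
Proof. unfold sum_range. simpl. rewrite Nat.sub_0_r. reflexivity. Qed.

Lemma sumR_swap_triangle n F :
  sumR (S n) (fun i => sumR (S i) (fun k => F i k)) =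
  sumR (S n) (fun k => sumR (S (n - k)) (fun j => F (k + j)%nat k)).
Proof.
  induction n.
  - reflexivity.
  - change (sumR (S (S n)) ?G) with (sumR (S n) G + G (S n)). rewrite IHn.
    rewrite (sumR_ext_lt (S n) (fun k => sumR (S (S n - k)) _)
      (fun k => sumR (S (n - k)) (fun j => F (k + j)%nat k) + F (S n) k)).
    + rewrite sumR_plus, Nat.sub_diag. cbn [sumR]. rewrite Nat.add_0_r.
      change (sumR n (fun k => F (S n) k)) with (sumR n (F (S n))). ring.
    + intros k Hk. replace (S n - k)%nat with (S (n - k)) by lia. simpl.
      replace (k + S (n - k))%nat with (S n) by lia. reflexivity.
Qed.

(** * Power series as coefficient sequences *)

(* [c : nat -> R] stands for the series [sum_j c j z^j]: [conv] is the product, [zderiv] is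
   [z d/dz], [shift c] is [(c - c 0) / z], [mul_zpow p] multiplies by [z^p], and [subst_sq c],
   [subst_opp c] are [c(z^2)], [c(-z)]. *)

Definition conv (c e : nat -> R) (n : nat) : R := sumR (S n) (fun k => c k * e (n - k)%nat).
Definition delta (j : nat) : R := match j with O => 1 | _ => 0 end.
Definition zderiv (c : nat -> R) (j : nat) : R := INR j * c j.
Definition shift (c : nat -> R) (j : nat) : R := c (S j).
Definition mul_zpow (p : nat) (c : nat -> R) (j : nat) : R :=
  if (p <=? j)%nat then c (j - p)%nat else 0.
Definition subst_sq (c : nat -> R) (j : nat) : R := if Nat.even j then c (Nat.div2 j) else 0.
Definition subst_opp (c : nat -> R) (j : nat) : R := (-1) ^ j * c j.

Lemma conv_0 c e : conv c e 0 = c O * e O.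
Proof. unfold conv; simpl; ring. Qed.

Lemma conv_S c e n : conv c e (S n) = c O * e (S n) + conv (shift c) e n.
Proof. apply sumR_Sl. Qed.

Lemma conv_comm c e : conv c e = conv e c.
Proof.
  apply functional_extensionality; intros n. unfold conv.
  rewrite sumR_reverse. apply sumR_ext_lt; intros k Hk.
  replace (S n - 1 - k)%nat with (n - k)%nat by lia.
  replace (n - (n - k))%nat with k by lia. ring.
Qed.

Lemma conv_assoc a b c : conv (conv a b) c = conv a (conv b c).
Proof.
  apply functional_extensionality; intros n. unfold conv.
  rewrite (sumR_ext _ _ (fun i => sumR (S i) (fun k => a k * b (i - k)%nat * c (n - i)%nat)))
    by (intros; symmetry; apply sumR_scal_r).
  rewrite sumR_swap_triangle. apply sumR_ext; intros k. rewrite <- sumR_scal_l.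
  apply sumR_ext; intros j.
  replace (k + j - k)%nat with j by lia. replace (n - (k + j))%nat with (n - k - j)%nat by lia.
  ring.
Qed.

Lemma conv_scal_l x c e : conv (fun j => x * c j) e = fun n => x * conv c e n.
Proof.
  apply functional_extensionality; intros n; unfold conv.
  rewrite <- sumR_scal_l. apply sumR_ext; intros; ring.
Qed.

Lemma conv_scal_r x c e : conv c (fun j => x * e j) = fun n => x * conv c e n.
Proof. rewrite conv_comm, conv_scal_l, conv_comm. reflexivity. Qed.

Lemma conv_plus_r c e e' : conv c (fun j => e j + e' j) = fun n => conv c e n + conv c e' n.
Proof.
  apply functional_extensionality; intros n; unfold conv.
  rewrite <- sumR_plus. apply sumR_ext; intros; ring.
Qed.

Lemma conv_delta_l e : conv delta e = e.
Proof.
  apply functional_extensionality; intros n; unfold conv.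
  rewrite sumR_Sl, sumR_eq_0 by (intros; simpl; ring). simpl. rewrite Nat.sub_0_r. ring.
Qed.

Lemma zderiv_conv c e : zderiv (conv c e) = fun n => conv (zderiv c) e n + conv c (zderiv e) n.
Proof.
  apply functional_extensionality; intros n; unfold zderiv, conv.
  rewrite <- sumR_plus, <- sumR_scal_l.
  apply sumR_ext_lt; intros k Hk. rewrite minus_INR by lia. ring.
Qed.

Lemma subst_sq_double x i : subst_sq x (2 * i) = x i.
Proof. unfold subst_sq. rewrite Nat.even_mul, Nat.div2_double. reflexivity. Qed.

Lemma subst_sq_double_S x i : subst_sq x (S (2 * i)) = 0.
Proof. unfold subst_sq. rewrite Nat.even_succ, Nat.odd_mul. reflexivity. Qed.

Lemma even_or_odd j : exists i, j = (2 * i)%nat \/ j = S (2 * i).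
Proof. destruct (Nat.Even_or_Odd j) as [[i H]|[i H]]; exists i; lia. Qed.

Lemma conv_subst_sq x y : conv (subst_sq x) (subst_sq y) = subst_sq (conv x y).
Proof.
  apply functional_extensionality; intros n.
  destruct (even_or_odd n) as [m [-> | ->]]; unfold conv.
  - rewrite subst_sq_double. cbn [sumR]. rewrite sumR_double. f_equal.
    + apply sumR_ext_lt; intros i Hi.
      replace (2 * m - 2 * i)%nat with (2 * (m - i))%nat by lia.
      replace (2 * m - S (2 * i))%nat with (S (2 * (m - i - 1))) by lia.
      rewrite !subst_sq_double, subst_sq_double_S. ring.
    + rewrite Nat.sub_diag, !subst_sq_double, Nat.sub_diag. reflexivity.
  - rewrite subst_sq_double_S. replace (S (S (2 * m))) with (2 * S m)%nat by lia.
    rewrite sumR_double. apply sumR_eq_0; intros i Hi.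
    replace (S (2 * m) - 2 * i)%nat with (S (2 * (m - i))) by lia.
    replace (S (2 * m) - S (2 * i))%nat with (2 * (m - i))%nat by lia.
    rewrite !subst_sq_double_S. ring.
Qed.

Lemma zderiv_subst_sq x : zderiv (subst_sq x) = subst_sq (fun i => 2 * zderiv x i).
Proof.
  apply functional_extensionality; intros n. unfold zderiv.
  destruct (even_or_odd n) as [m [-> | ->]].
  - rewrite !subst_sq_double, mult_INR. simpl (INR 2). ring.
  - rewrite !subst_sq_double_S. ring.
Qed.

Lemma subst_sq_scal k x : subst_sq (fun i => k * x i) = fun n => k * subst_sq x n.
Proof. apply functional_extensionality; intros n. unfold subst_sq. destruct (Nat.even n); ring. Qed.

Lemma conv_subst_opp x y : conv (subst_opp x) (subst_opp y) = subst_opp (conv x y).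
Proof.
  apply functional_extensionality; intros n. unfold conv, subst_opp. rewrite <- sumR_scal_l.
  apply sumR_ext_lt; intros k Hk.
  replace ((-1) ^ n) with ((-1) ^ k * (-1) ^ (n - k)) by (rewrite <- pow_add; f_equal; lia).
  ring.
Qed.

Lemma zderiv_subst_opp x : zderiv (subst_opp x) = subst_opp (zderiv x).
Proof. apply functional_extensionality; intros n. unfold zderiv, subst_opp. ring. Qed.

Lemma subst_opp_scal k x : subst_opp (fun i => k * x i) = fun n => k * subst_opp x n.
Proof. apply functional_extensionality; intros n. unfold subst_opp. ring. Qed.

(** * The coefficients [P n r b] of [b(z)^r] *)

Lemma Pfuel_enough r b fuel fuel' n : (n <= fuel)%nat -> (n <= fuel')%nat ->
  Pfuel fuel n r b = Pfuel fuel' n r b.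
Proof.
  revert fuel' n. induction fuel; intros fuel' n H1 H2.
  - replace n with O by lia. destruct fuel'; reflexivity.
  - destruct n; [destruct fuel'; reflexivity|].
    destruct fuel' as [|f']; [lia|]. simpl. f_equal.
    apply sumR_ext_lt; intros k Hk. f_equal. apply IHfuel; simpl; lia.
Qed.

Lemma P_S n r b : P (S n) r b = / (INR (S n) * b O) *
  sumR (S n) (fun j => (INR (S j) * (1 + r) - INR (S n)) * b (S j) * P (n - j)%nat r b).
Proof.
  unfold P at 1. simpl Pfuel. f_equal. unfold sum_range.
  replace (S (S n) - 1)%nat with (S n) by lia.
  apply sumR_ext_lt; intros j Hj. unfold P. f_equal. apply Pfuel_enough; simpl; lia.
Qed.

(* [Q = b^r] is characterised by [b (z Q') = r (z b') Q] together with [Q 0 = (b 0)^r];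
   the recursion defining [P] is this equation solved for the top coefficient. *)
Definition euler_eq (b Q : nat -> R) (r : R) : Prop :=
  forall n, conv b (zderiv Q) n = r * conv (zderiv b) Q n.

Lemma euler_eq_residual b Q r n :
  conv b (zderiv Q) n - r * conv (zderiv b) Q n =
  sumR (S n) (fun k => (INR (n - k) - r * INR k) * b k * Q (n - k)%nat).
Proof.
  unfold conv, zderiv. rewrite <- sumR_scal_l. unfold Rminus.
  rewrite <- sumR_opp, <- sumR_plus. apply sumR_ext; intros; ring.
Qed.

Lemma P_euler_eq b r : b O <> 0 -> euler_eq b (fun n => P n r b) r.
Proof.
  intros Hb n. apply Rminus_diag_uniq. rewrite euler_eq_residual. destruct n.
  - simpl. ring.
  - rewrite sumR_Sl, Nat.sub_0_r, P_S, INR_0, Rmult_0_r, Rminus_0_r.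
    match goal with |- ?A * ?B * (/ (?A * ?B) * ?X) + ?Y = 0 =>
      replace (A * B * (/ (A * B) * X)) with X by (field; split; [auto | apply not_0_INR; lia]) end.
    rewrite <- sumR_plus. apply sumR_eq_0; intros k Hk. simpl (S n - S k)%nat.
    rewrite minus_INR, !S_INR by lia. ring.
Qed.

Lemma conv_zderiv_P b r : 0 < b O ->
  conv b (zderiv (fun n => P n r b)) = fun n => r * conv (zderiv b) (fun n => P n r b) n.
Proof. intros Hb. apply functional_extensionality, P_euler_eq. lra. Qed.

Lemma euler_eq_unique b r Q : b O <> 0 -> Q O = Rpower (b O) r -> euler_eq b Q r ->
  Q = fun n => P n r b.
Proof.
  intros Hb H0 HQ. apply functional_extensionality; intros n.
  induction n as [n IH] using (well_founded_induction Wf_nat.lt_wf). destruct n; [exact H0|].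
  assert (EQ := HQ (S n)). assert (EP := P_euler_eq b r Hb (S n)).
  apply Rminus_diag_eq in EQ, EP. rewrite euler_eq_residual, sumR_Sl in EQ, EP.
  rewrite (sumR_ext_lt (S n) (fun j => _ * Q _)
    (fun j => (INR (S n - S j) - r * INR (S j)) * b (S j) * P (S n - S j)%nat r b)) in EQ
    by (intros k Hk; rewrite IH by (simpl; lia); reflexivity).
  rewrite Nat.sub_0_r, INR_0 in EQ, EP.
  assert (Hn : INR (S n) * b O <> 0)
    by (apply Rmult_integral_contrapositive; split; [apply not_0_INR|]; auto).
  rewrite Rmult_0_r, Rminus_0_r in EQ, EP.
  apply (Rmult_eq_reg_l (INR (S n) * b O)); [lra | exact Hn].
Qed.

Lemma P_0 b r : P 0 r b = Rpower (b O) r.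
Proof. reflexivity. Qed.

Lemma P_add b r s : 0 < b O -> (fun n => P n (r + s) b) = conv (fun n => P n r b) (fun n => P n s b).
Proof.
  intros Hb. symmetry. apply euler_eq_unique; [lra | rewrite conv_0, Rpower_plus; reflexivity |].
  intros n. rewrite zderiv_conv, conv_plus_r, <- !conv_assoc, (conv_zderiv_P b r Hb).
  rewrite (conv_comm b), conv_assoc, (conv_zderiv_P b s Hb), conv_scal_l, conv_scal_r.
  rewrite <- conv_assoc, (conv_comm (fun n => P n r b) (zderiv b)), !conv_assoc. ring.
Qed.

Lemma P_zero_exponent b : 0 < b O -> (fun n => P n 0 b) = delta.
Proof.
  intros Hb. symmetry. apply euler_eq_unique; [lra | rewrite Rpower_O; auto |].
  intros n. rewrite Rmult_0_l. unfold conv. apply sumR_eq_0. intros k Hk. unfold zderiv.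
  destruct (n - k)%nat; simpl; ring.
Qed.

Lemma P_one_exponent b : 0 < b O -> (fun n => P n 1 b) = b.
Proof.
  intros Hb. symmetry. apply euler_eq_unique; [lra | rewrite Rpower_1; auto |].
  intros n. rewrite Rmult_1_l, conv_comm. reflexivity.
Qed.

Lemma conv_P_opp_one c : 0 < c O -> conv c (fun n => P n (-1) c) = delta.
Proof.
  intros Hc. rewrite <- (P_one_exponent c Hc) at 1. rewrite <- P_add by exact Hc.
  replace (1 + -1) with 0 by ring. apply P_zero_exponent, Hc.
Qed.

Lemma P_subst_sq b r : 0 < b O -> (fun n => P n r (subst_sq b)) = subst_sq (fun n => P n r b).
Proof.
  intros Hb. symmetry. apply euler_eq_unique; [unfold subst_sq; simpl; lra | reflexivity |].
  intros n. rewrite !zderiv_subst_sq, conv_subst_sq, (conv_comm (subst_sq _)), conv_subst_sq.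
  rewrite !conv_scal_r, (conv_comm (fun n => P n r b)), (conv_zderiv_P b r Hb), !subst_sq_scal.
  ring.
Qed.

Lemma P_subst_opp b r : 0 < b O -> (fun n => P n r (subst_opp b)) = subst_opp (fun n => P n r b).
Proof.
  intros Hb. symmetry.
  apply euler_eq_unique; unfold subst_opp; [simpl; lra | simpl; rewrite !Rmult_1_l; reflexivity |].
  intros n. fold (subst_opp b) (subst_opp (fun n => P n r b)).
  rewrite !zderiv_subst_opp, !conv_subst_opp, (conv_zderiv_P b r Hb), subst_opp_scal. reflexivity.
Qed.

Lemma Rpower_1_l x : Rpower 1 x = 1.
Proof. unfold Rpower. rewrite ln_1, Rmult_0_r. apply exp_0. Qed.

Lemma P_delta r : (fun n => P n r delta) = delta.
Proof.
  symmetry. apply euler_eq_unique; [simpl; lra | simpl; rewrite Rpower_1_l; reflexivity |].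
  assert (Hz : zderiv delta = fun _ => 0)
    by (apply functional_extensionality; intros [|k]; unfold zderiv; simpl; ring).
  intros n. rewrite Hz. unfold conv. rewrite !sumR_eq_0; [ring | |]; intros; ring.
Qed.

(** * Limits and asymptotic expansions at [0+] *)

Definition lim0 (F : R -> R) (l : R) : Prop := filterlim F (at_right 0) (locally l).

Lemma ball_R (x y : R) (e : posreal) : ball x e y -> x - e < y < x + e.
Proof. intros H. change (Rabs (y - x) < e) in H. apply Rabs_lt_between'. exact H. Qed.

Lemma at_right_0_of_pos (Q : R -> Prop) : (forall u, 0 < u -> Q u) -> at_right 0 Q.
Proof. intros H. unfold at_right, within. apply filter_forall; auto. Qed.

Lemma at_right_0_of_unit (Q : R -> Prop) : (forall u, 0 < u < 1 -> Q u) -> at_right 0 Q.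
Proof.
  intros H. exists (mkposreal 1 Rlt_0_1). intros u Hu Hpos.
  apply ball_R in Hu. simpl in Hu. apply H. lra.
Qed.

Lemma lim0_const k : lim0 (fun _ => k) k.
Proof. apply filterlim_const. Qed.

Lemma lim0_id : lim0 (fun u => u) 0.
Proof. apply (filterlim_filter_le_1 _ (filter_le_within _)), filterlim_id. Qed.

Lemma lim0_plus F G l m : lim0 F l -> lim0 G m -> lim0 (fun u => F u + G u) (l + m).
Proof. intros HF HG. exact (filterlim_comp_2 _ _ _ HF HG (filterlim_plus l m)). Qed.

Lemma lim0_mult F G l m : lim0 F l -> lim0 G m -> lim0 (fun u => F u * G u) (l * m).
Proof. intros HF HG. exact (filterlim_comp_2 _ _ _ HF HG (filterlim_mult l m)). Qed.

Lemma lim0_scal k F l : lim0 F l -> lim0 (fun u => k * F u) (k * l).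
Proof. apply lim0_mult, lim0_const. Qed.

Lemma lim0_pow F l n : lim0 F l -> lim0 (fun u => F u ^ n) (l ^ n).
Proof. intros H. induction n; [apply lim0_const | apply lim0_mult; auto]. Qed.

Lemma lim0_inv F l : lim0 F l -> l <> 0 -> lim0 (fun u => / F u) (/ l).
Proof.
  intros H Hl. apply (filterlim_comp _ _ _ F Rinv _ (Rbar_locally (Finite l))); [exact H|].
  apply (filterlim_Rbar_inv (Finite l)). intros E. injection E. exact Hl.
Qed.

Lemma lim0_unique F l m : lim0 F l -> lim0 F m -> l = m.
Proof.
  apply (@filterlim_locally_unique _ R_AbsRing R_NormedModule), Proper_StrongProper.
  apply at_right_proper_filter.
Qed.

Lemma lim0_eventually_pos F l : lim0 F l -> 0 < l -> at_right 0 (fun u => 0 < F u).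
Proof.
  intros H Hl. apply filterlim_locally with (eps := mkposreal l Hl) in H.
  revert H. apply filter_imp. intros u Hu. apply ball_R in Hu. simpl in Hu. lra.
Qed.

Lemma lim0_comp rho w : lim0 rho 0 -> lim0 w 0 -> at_right 0 (fun u => 0 < w u) ->
  lim0 (fun u => rho (w u)) 0.
Proof.
  intros Hr Hw Hp. apply (filterlim_comp _ _ _ w rho _ (at_right 0)); [|exact Hr].
  intros P HP. apply Hw in HP.
  exact (filter_imp _ _ (fun u H => proj1 H (proj2 H)) (filter_and _ _ HP Hp)).
Qed.

Lemma lim0_of_lim_p_infty F : is_lim F p_infty 0 -> lim0 (fun w => F (/ w)) 0.
Proof. intros H. exact (filterlim_comp _ _ _ Rinv F _ _ _ filterlim_Rinv_0_right H). Qed.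

(* [is_expansion F c K] encodes [F u = c 0 + c 1 u + ... + c K u^K + o(u^K)] as [u -> 0+]
   one coefficient at a time: [F -> c 0], then [(F u - c 0) / u] has expansion [shift c]. *)
Fixpoint is_expansion (F : R -> R) (c : nat -> R) (K : nat) : Prop :=
  match K with
  | O => lim0 F (c O)
  | S K' => lim0 F (c O) /\ is_expansion (fun u => (F u - c O) / u) (shift c) K'
  end.

Lemma is_expansion_lim F c K : is_expansion F c K -> lim0 F (c O).
Proof. destruct K; simpl; tauto. Qed.

Lemma is_expansion_ext K F G c e :
  at_right 0 (fun u => F u = G u) -> (forall j, (j <= K)%nat -> c j = e j) ->
  is_expansion F c K -> is_expansion G e K.
Proof.
  revert F G c e. induction K; simpl; intros F G c e HFG Hce H.
  - rewrite <- Hce by lia. exact (filterlim_ext_loc _ _ HFG H).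
  - destruct H as [H0 H1]. rewrite <- Hce by lia. split.
    + exact (filterlim_ext_loc _ _ HFG H0).
    + eapply IHK; [| | exact H1].
      * revert HFG. apply filter_imp. intros u E. rewrite E. reflexivity.
      * intros j Hj. apply Hce. lia.
Qed.

Lemma is_expansion_ext_pos K F G c e :
  (forall u, 0 < u -> F u = G u) -> (forall j, (j <= K)%nat -> c j = e j) ->
  is_expansion F c K -> is_expansion G e K.
Proof. intros HFG. apply is_expansion_ext, at_right_0_of_pos, HFG. Qed.

Lemma is_expansion_le K K' F c : (K <= K')%nat -> is_expansion F c K' -> is_expansion F c K.
Proof.
  intros Hle. revert K Hle F c. induction K'; intros K Hle F c H.
  - replace K with O by lia. exact H.
  - destruct K; [exact (proj1 H)|]. split; [exact (proj1 H)|]. apply IHK'; [lia | exact (proj2 H)].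
Qed.

Lemma is_expansion_unique K F c e : is_expansion F c K -> is_expansion F e K ->
  forall j, (j <= K)%nat -> c j = e j.
Proof.
  revert F c e. induction K; simpl; intros F c e Hc He j Hj.
  - replace j with O by lia. exact (lim0_unique _ _ _ Hc He).
  - destruct Hc as [Hc0 Hc1], He as [He0 He1].
    assert (E0 : c O = e O) by exact (lim0_unique _ _ _ Hc0 He0).
    destruct j; [exact E0|]. rewrite E0 in Hc1. apply (IHK _ _ _ Hc1 He1). lia.
Qed.

Lemma is_expansion_zero K : is_expansion (fun _ => 0) (fun _ => 0) K.
Proof.
  induction K; simpl; [apply lim0_const|]. split; [apply lim0_const|].
  eapply is_expansion_ext_pos; [| | exact IHK]; intros; unfold Rdiv, shift; ring.
Qed.

Lemma is_expansion_const K k : is_expansion (fun _ => k) (fun j => k * delta j) K.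
Proof.
  destruct K; simpl; rewrite Rmult_1_r; [apply lim0_const|]. split; [apply lim0_const|].
  eapply is_expansion_ext_pos; [| | exact (is_expansion_zero K)];
    intros; unfold Rdiv, shift; simpl; ring.
Qed.

Lemma is_expansion_plus K F G c e : is_expansion F c K -> is_expansion G e K ->
  is_expansion (fun u => F u + G u) (fun j => c j + e j) K.
Proof.
  revert F G c e. induction K; simpl; intros F G c e HF HG; [apply lim0_plus; assumption|].
  destruct HF as [HF0 HF1], HG as [HG0 HG1]. split; [apply lim0_plus; assumption|].
  eapply is_expansion_ext_pos; [| | exact (IHK _ _ _ _ HF1 HG1)].
  - intros u Hu. cbv beta. field. lra.
  - reflexivity.
Qed.

Lemma is_expansion_scal K k F c : is_expansion F c K ->
  is_expansion (fun u => k * F u) (fun j => k * c j) K.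
Proof.
  revert F c. induction K; simpl; intros F c HF; [apply lim0_scal; assumption|].
  destruct HF as [HF0 HF1]. split; [apply lim0_scal; assumption|].
  eapply is_expansion_ext_pos; [| | exact (IHK _ _ HF1)].
  - intros u Hu. cbv beta. field. lra.
  - reflexivity.
Qed.

Lemma is_expansion_sum K N Fs cs : (forall n, (n < N)%nat -> is_expansion (Fs n) (cs n) K) ->
  is_expansion (fun u => sumR N (fun n => Fs n u)) (fun j => sumR N (fun n => cs n j)) K.
Proof.
  induction N; intros H; [apply is_expansion_zero|].
  apply is_expansion_plus; [apply IHN; intros; apply H|apply H]; lia.
Qed.

Lemma is_expansion_mul_zpow p K F c : is_expansion F c K ->
  is_expansion (fun u => u ^ p * F u) (mul_zpow p c) (p + K).
Proof.
  intros H. induction p; simpl.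
  - eapply is_expansion_ext_pos; [| | exact H]; [intros; ring|].
    intros j _. unfold mul_zpow. simpl. rewrite Nat.sub_0_r. reflexivity.
  - split.
    + unfold mul_zpow; simpl. rewrite <- (Rmult_0_l (mul_zpow p c O)).
      apply (filterlim_ext (fun u => u * (u ^ p * F u))); [intros; ring|].
      exact (lim0_mult _ _ _ _ lim0_id (is_expansion_lim _ _ _ IHp)).
    + eapply is_expansion_ext_pos; [| | exact IHp]; [|reflexivity].
      intros u Hu. unfold mul_zpow. cbv beta. simpl. field. lra.
Qed.

Lemma is_expansion_small K F : lim0 F 0 -> is_expansion (fun u => u ^ K * F u) (fun _ => 0) K.
Proof.
  intros H. apply (is_expansion_le K (K + 0)); [lia|].
  eapply is_expansion_ext_pos; [| | exact (is_expansion_mul_zpow K 0 F (fun _ => 0) H)]; [reflexivity|].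
  intros j _. unfold mul_zpow. destruct (K <=? j)%nat; reflexivity.
Qed.

Lemma is_expansion_mult K F G c e : is_expansion F c K -> is_expansion G e K ->
  is_expansion (fun u => F u * G u) (conv c e) K.
Proof.
  revert F G c e. induction K; simpl; intros F G c e HF HG.
  - rewrite conv_0. apply lim0_mult; assumption.
  - destruct HF as [HF0 HF1], HG as [HG0 HG1]. rewrite conv_0. split; [apply lim0_mult; assumption|].
    assert (HG' : is_expansion G e K) by (apply (is_expansion_le K (S K)); [lia | split; assumption]).
    eapply is_expansion_ext_pos;
      [| | exact (is_expansion_plus _ _ _ _ _
             (IHK _ _ _ _ HF1 HG') (is_expansion_scal _ (c O) _ _ HG1))].
    + intros u Hu. cbv beta. field. lra.
    + intros j _. unfold shift at 3. rewrite conv_S. unfold shift. ring.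
Qed.

Lemma is_expansion_minus K F G c e : is_expansion F c K -> is_expansion G e K ->
  is_expansion (fun u => F u - G u) (fun j => c j - e j) K.
Proof.
  intros HF HG. eapply is_expansion_ext_pos;
    [| | exact (is_expansion_plus _ _ _ _ _ HF (is_expansion_scal _ (-1) _ _ HG))];
    intros; cbv beta; ring.
Qed.

Lemma is_expansion_one K : is_expansion (fun _ => 1) delta K.
Proof. eapply is_expansion_ext_pos; [| | exact (is_expansion_const K 1)]; intros; cbv beta; ring. Qed.

Lemma is_expansion_id K : is_expansion (fun u => u) (mul_zpow 1 delta) K.
Proof.
  apply (is_expansion_le K (1 + K)); [lia|].
  eapply is_expansion_ext_pos; [| | exact (is_expansion_mul_zpow 1 K _ _ (is_expansion_one K))];
    intros; simpl; ring.
Qed.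

Lemma is_expansion_inv K F c : 0 < c O -> is_expansion F c K ->
  is_expansion (fun u => / F u) (fun n => P n (-1) c) K.
Proof.
  intros Hc. set (q := fun n => P n (-1) c).
  assert (Hq : forall n, conv c q n = delta n) by (intros; unfold q; rewrite conv_P_opp_one; auto).
  assert (Hq0 : q O = / c O)
    by (specialize (Hq O); rewrite conv_0 in Hq; simpl in Hq; field_simplify_eq; lra).
  induction K; intros HF.
  - simpl. rewrite Hq0. apply lim0_inv; [exact HF | lra].
  - assert (IH := IHK (is_expansion_le K (S K) _ _ (Nat.le_succ_diag_r K) HF)).
    destruct HF as [HF0 HF1]. split; [rewrite Hq0; apply lim0_inv; [exact HF0 | lra]|].
    eapply is_expansion_ext;
      [| | exact (is_expansion_scal _ (- q O) _ _ (is_expansion_mult _ _ _ _ _ HF1 IH))].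
    + generalize (filter_and _ _ (at_right_0_of_pos _ (fun u Hu => Hu))
        (lim0_eventually_pos _ _ HF0 Hc)).
      apply filter_imp. intros u [Hu HFu]. cbv beta. rewrite Hq0. field. lra.
    + intros j _. specialize (Hq (S j)). rewrite conv_S in Hq. change (delta (S j)) with 0 in Hq.
      cbv beta. rewrite Hq0. replace (conv (shift c) q j) with (- (c O * q (S j))) by lra. unfold shift.
      field. lra.
Qed.

Lemma is_expansion_pow K F c r m : 0 < c O -> is_expansion F (fun n => P n r c) K ->
  is_expansion (fun u => F u ^ m) (fun n => P n (INR m * r) c) K.
Proof.
  intros Hc HF. induction m.
  - rewrite Rmult_0_l, P_zero_exponent by exact Hc.
    eapply is_expansion_ext_pos; [| | exact (is_expansion_one K)]; reflexivity.
  - replace (INR (S m) * r) with (INR m * r + r) by (rewrite S_INR; ring).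
    rewrite P_add by exact Hc.
    eapply is_expansion_ext_pos; [| | exact (is_expansion_mult _ _ _ _ _ IHm HF)]; intros; simpl; ring.
Qed.

(** * Composition with an even expansion *)

Definition cross_pow (x y : nat -> R) (n : nat) : nat -> R :=
  conv (fun k => P k (2 * INR n) x) (fun k => P k (- 2 * INR n + 1) y).

(* [H w^(2n)] for [w = u G / H]: the [n]-th term of [H f(u G / H)] *)
Lemma is_expansion_comp_term K n G H gam eta : 0 < gam O -> 0 < eta O ->
  is_expansion G gam K -> is_expansion H eta K ->
  is_expansion (fun u => u ^ (2 * n) * (G u ^ (2 * n) * (H u * (/ H u) ^ (2 * n))))
    (mul_zpow (2 * n) (cross_pow gam eta n)) K.
Proof.
  intros Hg He HG HH. unfold cross_pow.
  apply (is_expansion_le K (2 * n + K)); [lia|]. apply is_expansion_mul_zpow.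
  replace (- 2 * INR n + 1) with (1 + INR (2 * n) * -1) by (rewrite mult_INR; simpl; ring).
  replace (2 * INR n) with (INR (2 * n) * 1) by (rewrite mult_INR; simpl; ring).
  rewrite P_add, P_one_exponent by exact He.
  apply is_expansion_mult; [|apply is_expansion_mult; [exact HH|]].
  - apply is_expansion_pow; [exact Hg|]. rewrite P_one_exponent by exact Hg. exact HG.
  - apply is_expansion_pow; [exact He|]. apply is_expansion_inv; assumption.
Qed.

Definition even_remainder (f : R -> R) (a : nat -> R) (N : nat) (w : R) : R :=
  (f w - sumR (S N) (fun n => a n * w ^ (2 * n))) / w ^ (2 * N).

Definition has_even_expansion (f : R -> R) (a : nat -> R) : Prop :=
  forall N, lim0 (even_remainder f a N) 0.

Lemma is_expansion_comp_remainder f a lam G H gam eta K :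
  has_even_expansion f a -> 0 < gam O -> 0 < eta O -> lim0 G (gam O) -> lim0 H (eta O) ->
  is_expansion (fun u => u ^ (2 * K) *
    (lam * H u * (G u / H u) ^ (2 * K) * even_remainder f a K (u * (G u / H u)))) (fun _ => 0) K.
Proof.
  intros Hf Hg He LG LH.
  assert (LGH : lim0 (fun u => G u / H u) (gam O / eta O))
    by (apply lim0_mult; [exact LG | apply lim0_inv; [exact LH | lra]]).
  assert (Pos : at_right 0 (fun u => 0 < u * (G u / H u))).
  { generalize (filter_and _ _ (at_right_0_of_pos _ (fun u Hu => Hu))
      (filter_and _ _ (lim0_eventually_pos _ _ LG Hg) (lim0_eventually_pos _ _ LH He))).
    apply filter_imp. intros u [Hu [HGu HHu]].
    apply Rmult_lt_0_compat; [exact Hu | apply Rdiv_lt_0_compat; assumption]. }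
  apply (is_expansion_le K (2 * K)); [lia|]. apply is_expansion_small.
  rewrite <- (Rmult_0_r (lam * eta O * (gam O / eta O) ^ (2 * K))).
  apply lim0_mult; [apply lim0_mult; [apply lim0_scal, LH | apply lim0_pow, LGH]|].
  apply lim0_comp; [apply Hf | | exact Pos].
  rewrite <- (Rmult_0_l (gam O / eta O)). exact (lim0_mult _ _ _ _ lim0_id LGH).
Qed.

Definition comp_coef (a : nat -> R) (lam : R) (gam eta : nat -> R) (j : nat) : R :=
  lam * sumR (S j) (fun n => a n * mul_zpow (2 * n) (cross_pow gam eta n) j).

Lemma is_expansion_comp f a lam G H gam eta K :
  has_even_expansion f a -> 0 < gam O -> 0 < eta O ->
  is_expansion G gam K -> is_expansion H eta K ->
  is_expansion (fun u => lam * H u * f (u * G u / H u)) (comp_coef a lam gam eta) K.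
Proof.
  intros Hf Hg He HG HH.
  assert (LG := is_expansion_lim _ _ _ HG). assert (LH := is_expansion_lim _ _ _ HH).
  assert (Pos : at_right 0 (fun u => 0 < u /\ 0 < G u /\ 0 < H u))
    by (repeat apply filter_and; [apply at_right_0_of_pos; auto
      | apply (lim0_eventually_pos _ _ LG Hg) | apply (lim0_eventually_pos _ _ LH He)]).
  eapply is_expansion_ext; [| | exact (is_expansion_plus _ _ _ _ _
    (is_expansion_sum K (S K) _ _ (fun n _ =>
      is_expansion_scal _ (lam * a n) _ _ (is_expansion_comp_term K n G H gam eta Hg He HG HH)))
    (is_expansion_comp_remainder f a lam G H gam eta K Hf Hg He LG LH))].
  - revert Pos. apply filter_imp. intros u [Hu [HGu HHu]]. cbv beta.
    set (w := u * (G u / H u)). replace (u * G u / H u) with w by (unfold w, Rdiv; ring).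
    assert (Hw : 0 < w) by (apply Rmult_lt_0_compat; [exact Hu | apply Rdiv_lt_0_compat; assumption]).
    replace (f w) with (sumR (S K) (fun n => a n * w ^ (2 * n)) + w ^ (2 * K) * even_remainder f a K w)
      by (unfold even_remainder; field; apply pow_nonzero; lra).
    rewrite Rmult_plus_distr_l, <- sumR_scal_l. f_equal.
    + apply sumR_ext; intros n. unfold w, Rdiv. rewrite !Rpow_mult_distr, pow_inv. ring.
    + unfold w, Rdiv. rewrite !Rpow_mult_distr. ring.
  - intros j Hj. cbv beta. rewrite Rplus_0_r. unfold comp_coef. rewrite <- sumR_scal_l.
    rewrite (sumR_zero_tail (S j) (S K)); [apply sumR_ext; intros; ring | lia |].
    intros n Hn. unfold mul_zpow. destruct (Nat.leb_spec (2 * n) j); [lia | ring].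
Qed.

Lemma mul_zpow_subst_opp p c j : mul_zpow (2 * p) (subst_opp c) j = (-1) ^ j * mul_zpow (2 * p) c j.
Proof.
  unfold mul_zpow, subst_opp. destruct (Nat.leb_spec (2 * p) j); [|ring].
  replace ((-1) ^ j) with ((-1) ^ (j - 2 * p) * (-1) ^ (2 * p)) by (rewrite <- pow_add; f_equal; lia).
  rewrite pow_1_even. ring.
Qed.

Lemma comp_coef_subst_opp a lam g h : 0 < g O -> 0 < h O ->
  comp_coef a lam (subst_opp g) (subst_opp h) = subst_opp (comp_coef a lam g h).
Proof.
  intros Hg Hh. apply functional_extensionality; intros j. unfold comp_coef, subst_opp at 3.
  rewrite <- Rmult_assoc, (Rmult_comm _ lam), Rmult_assoc. f_equal. rewrite <- sumR_scal_l.
  apply sumR_ext; intros n.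
  unfold cross_pow.
  rewrite P_subst_opp, (P_subst_opp h), conv_subst_opp, mul_zpow_subst_opp by assumption. ring.
Qed.

Lemma comp_coef_delta a : comp_coef a 1 delta delta = subst_sq a.
Proof.
  apply functional_extensionality; intros j. unfold comp_coef. rewrite Rmult_1_l.
  rewrite (sumR_ext _ _ (fun n => a n * mul_zpow (2 * n) delta j))
    by (intros n; unfold cross_pow; rewrite !P_delta, conv_delta_l; reflexivity).
  destruct (even_or_odd j) as [i [-> | ->]].
  - rewrite subst_sq_double, (sumR_singleton _ i); [| lia |].
    + unfold mul_zpow. rewrite Nat.leb_refl, Nat.sub_diag. simpl. ring.
    + intros n _ Hni. unfold mul_zpow. destruct (Nat.leb_spec (2 * n) (2 * i)); [|ring].
      replace (2 * i - 2 * n)%nat with (S (2 * i - 2 * n - 1)) by lia. simpl. ring.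
  - rewrite subst_sq_double_S. apply sumR_eq_0. intros n _. unfold mul_zpow.
    destruct (Nat.leb_spec (2 * n) (S (2 * i))); [|ring].
    replace (S (2 * i) - 2 * n)%nat with (S (2 * i - 2 * n)) by lia. simpl. ring.
Qed.

Lemma comp_coef_subst_sq a d s m : 0 < d O -> 0 < s O ->
  comp_coef a 1 (subst_sq d) (subst_sq s) (2 * m) =
  sumR (S m) (fun n => a n * cross_pow d s n (m - n)).
Proof.
  intros Hd Hs. unfold comp_coef. rewrite Rmult_1_l.
  rewrite (sumR_zero_tail (S m) (S (2 * m))); [| lia |].
  - apply sumR_ext_lt; intros n Hn. unfold cross_pow.
    rewrite P_subst_sq, (P_subst_sq s), conv_subst_sq by assumption.
    unfold mul_zpow. destruct (Nat.leb_spec (2 * n) (2 * m)); [|lia].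
    replace (2 * m - 2 * n)%nat with (2 * (m - n))%nat by lia. rewrite subst_sq_double. reflexivity.
  - intros n Hn. unfold mul_zpow. destruct (Nat.leb_spec (2 * n) (2 * m)); [lia | ring].
Qed.

Lemma gseq_0_pos a : 0 < gseq a O.
Proof. simpl. lra. Qed.

Lemma hseq_0_pos a : 0 < hseq a O.
Proof. simpl. lra. Qed.

Lemma gseq_eq a j : gseq a j = delta j + shift (subst_sq a) j.
Proof.
  unfold shift, subst_sq. destruct j; [simpl; ring|].
  unfold gseq. rewrite Nat.odd_succ. cbn [Nat.even Nat.div2 delta]. ring.
Qed.

Lemma subst_opp_gseq a j : subst_opp (gseq a) j = delta j - shift (subst_sq a) j.
Proof.
  unfold subst_opp. rewrite gseq_eq. unfold shift.
  destruct j; [unfold subst_sq; simpl; ring|]. cbn [delta].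
  destruct (even_or_odd j) as [i [-> | ->]].
  - replace (S (S (2 * i))) with (2 * S i)%nat by lia. rewrite subst_sq_double, pow_1_odd. ring.
  - replace (S (S (S (2 * i)))) with (S (2 * S i)) by lia. rewrite subst_sq_double_S. ring.
Qed.

Lemma hseq_eq a j : a O = 1 -> hseq a j = delta j - mul_zpow 1 delta j + subst_sq a j.
Proof.
  intros Ha. unfold mul_zpow, subst_sq. destruct j as [|[|j]]; [simpl; rewrite Ha; ring | simpl; ring |].
  unfold hseq. cbn [Nat.leb Nat.sub delta Nat.even Nat.div2]. ring.
Qed.

Lemma subst_opp_hseq a j : a O = 1 ->
  subst_opp (hseq a) j = delta j + mul_zpow 1 delta j + subst_sq a j.
Proof.
  intros Ha. unfold subst_opp. rewrite hseq_eq by exact Ha. unfold mul_zpow.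
  destruct j as [|[|j]]; [simpl; ring | unfold subst_sq; simpl; ring |].
  cbn [Nat.leb Nat.sub delta]. destruct (even_or_odd j) as [i [-> | ->]].
  - replace (S (S (2 * i))) with (2 * S i)%nat by lia. rewrite subst_sq_double, pow_1_even. ring.
  - replace (S (S (S (2 * i)))) with (S (2 * S i)) by lia. rewrite subst_sq_double_S. ring.
Qed.

Lemma sseq_0 a : a O = 1 -> sseq a O = 1.
Proof.
  intros Ha. unfold sseq, sum_range. simpl sumR.
  rewrite Ha, !P_0, !Rmult_0_r, !Rplus_0_l, Rpower_O, Rpower_1 by (simpl; lra). simpl. field.
Qed.

Lemma dseq_0 a : a O = 1 -> dseq a O = / 2.
Proof.
  intros Ha. unfold dseq, sum_range. simpl sumR. rewrite !Rmult_0_r, !Rplus_0_l.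
  rewrite !(equal_f (P_zero_exponent _ (gseq_0_pos a))), !(equal_f (P_one_exponent _ (hseq_0_pos a))).
  simpl. rewrite Ha. field.
Qed.

Lemma comp_coef_gh_even a i : comp_coef a (/ 2) (gseq a) (hseq a) (2 * i) = sseq a i.
Proof.
  unfold comp_coef, sseq, sum_range. rewrite Nat.sub_0_r. apply f_equal.
  rewrite (sumR_zero_tail (S i) (S (2 * i))); [| lia |].
  - apply sumR_ext_lt; intros n Hn. unfold mul_zpow.
    destruct (Nat.leb_spec (2 * n) (2 * i)); [reflexivity | lia].
  - intros n Hn. unfold mul_zpow. destruct (Nat.leb_spec (2 * n) (2 * i)); [lia | ring].
Qed.

Lemma comp_coef_gh_odd a i : comp_coef a (/ 2) (gseq a) (hseq a) (S (2 * i)) = - dseq a i.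
Proof.
  unfold comp_coef, dseq, sum_range. rewrite Nat.sub_0_r, Ropp_mult_distr_l, Ropp_involutive.
  apply f_equal.
  rewrite (sumR_zero_tail (S i) (S (S (2 * i)))); [| lia |].
  - apply sumR_ext_lt; intros n Hn. unfold mul_zpow.
    destruct (Nat.leb_spec (2 * n) (S (2 * i))); [|lia].
    replace (2 * i + 1)%nat with (S (2 * i)) by lia. reflexivity.
  - intros n Hn. unfold mul_zpow. destruct (Nat.leb_spec (2 * n) (S (2 * i))); [lia | ring].
Qed.

(** * Stable means *)

Lemma homogeneous_mean_eq M s t : homogeneous_mean M -> 0 < s -> 0 < t ->
  M s t = (s + t) / 2 * M (1 - (t - s) / (s + t)) (1 + (t - s) / (s + t)).
Proof.
  intros HM Hs Ht.
  replace (1 - (t - s) / (s + t)) with (2 * s / (s + t)) by (field; lra).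
  replace (1 + (t - s) / (s + t)) with (2 * t / (s + t)) by (field; lra).
  rewrite <- HM by (apply Rdiv_lt_0_compat; lra).
  f_equal; field; lra.
Qed.

Lemma is_mean_pos M s t : is_mean M -> 0 < s -> 0 < t -> 0 < M s t.
Proof. intros HM Hs Ht. destruct (HM s t Hs Ht) as [H _]. generalize (Rmin_pos s t Hs Ht). lra. Qed.

Lemma powerRZ_inv_odd w n : 0 < w -> powerRZ (/ w) (1 - 2 * Z.of_nat n) = w ^ (2 * n) / w.
Proof.
  intros Hw. rewrite powerRZ_Rpower by (apply Rinv_0_lt_compat; exact Hw).
  replace (IZR (1 - 2 * Z.of_nat n)) with (1 + - INR (2 * n))
    by (rewrite minus_IZR, mult_IZR, <- INR_IZR_INZ, mult_INR; simpl; ring).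
  rewrite Rpower_plus, Rpower_1, Rpower_Ropp, Rpower_pow, pow_inv, Rinv_inv
    by (apply Rinv_0_lt_compat; exact Hw).
  unfold Rdiv. ring.
Qed.

Section StableMean.

Variables (M : R -> R -> R) (a : nat -> R).
Hypothesis Hmean : is_mean M.
Hypothesis Hhom : homogeneous_mean M.
Hypothesis Hstab : stable_mean M.
Hypothesis Hexp : has_sym_asymp_expansion M a.

Lemma sym_expansion_coef_0 : a O = 1.
Proof.
  generalize (Hexp 0 O). intros HE. apply is_lim_spec in HE.
  apply Rminus_diag_uniq_sym, Rabs_eq_0, Rle_antisym; [|apply Rabs_pos].
  apply Rnot_lt_le. intros Hp. destruct (HE (mkposreal _ Hp)) as [X HX]. simpl in HX.
  set (x := Rabs X + 1). assert (Hx : 0 < x) by (unfold x; generalize (Rabs_pos X); lra).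
  specialize (HX x ltac:(unfold x; generalize (Rle_abs X); lra)).
  assert (Mx : M (x - 0) (x + 0) = x).
  { rewrite Rminus_0_r, Rplus_0_r. destruct (Hmean x x Hx Hx).
    rewrite Rmin_left, Rmax_left in * by lra. lra. }
  rewrite Mx in HX. unfold sum_range in HX. simpl in HX.
  replace ((x - (0 + a O * 1 * (x * 1))) / (x * 1) - 0) with (1 - a O) in HX by (field; lra). lra.
Qed.

Definition profile (w : R) : R := M (1 - w) (1 + w).

Lemma profile_even_expansion : has_even_expansion profile a.
Proof.
  intros N. eapply filterlim_ext_loc; [| exact (lim0_of_lim_p_infty _ (Hexp 1 N))].
  apply at_right_0_of_unit. intros w Hw. unfold even_remainder, profile.
  replace (/ w - 1) with (/ w * (1 - w)) by (field; lra).
  replace (/ w + 1) with (/ w * (1 + w)) by (field; lra).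
  rewrite Hhom by (try apply Rinv_0_lt_compat; lra).
  unfold sum_range. rewrite Nat.sub_0_r, powerRZ_inv_odd by lra.
  rewrite (sumR_ext _ _ (fun n => / w * (a n * w ^ (2 * n))))
    by (intros n; cbv beta; rewrite Nat.add_0_l, powerRZ_inv_odd, pow1 by lra; unfold Rdiv; ring).
  rewrite sumR_scal_l. field. split; [apply pow_nonzero|]; lra.
Qed.

Lemma is_expansion_profile K : is_expansion profile (subst_sq a) K.
Proof.
  eapply is_expansion_ext_pos;
    [| | exact (is_expansion_comp _ _ 1 _ _ delta delta K profile_even_expansion Rlt_0_1 Rlt_0_1
           (is_expansion_one K) (is_expansion_one K))].
  - intros u _. cbv beta. rewrite Rdiv_1_r, !Rmult_1_r, Rmult_1_l. reflexivity.
  - intros j _. rewrite comp_coef_delta. reflexivity.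
Qed.

Lemma is_expansion_profile_slope K :
  is_expansion (fun u => (profile u - 1) / u) (shift (subst_sq a)) K.
Proof.
  generalize (proj2 (is_expansion_profile (S K))).
  change (subst_sq a O) with (a O). rewrite sym_expansion_coef_0. auto.
Qed.

(* [mean_l u] and [mean_r u] are [M (1 - u) (profile u)] and [M (profile u) (1 + u)]
   ([mean_l_eq], [mean_r_eq]) rewritten by homogeneity in the shape of [is_expansion_comp]. *)
Definition num_l (u : R) : R := 1 + (profile u - 1) / u.
Definition den_l (u : R) : R := 1 - u + profile u.
Definition num_r (u : R) : R := 1 - (profile u - 1) / u.
Definition den_r (u : R) : R := 1 + u + profile u.

Definition mean_l (u : R) : R := / 2 * den_l u * profile (u * num_l u / den_l u).
Definition mean_r (u : R) : R := / 2 * den_r u * profile (u * num_r u / den_r u).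
Definition half_sum (u : R) : R := / 2 * (mean_l u + mean_r u).
Definition half_diff (u : R) : R := / 2 * (mean_r u - mean_l u) / u.

Lemma is_expansion_num_l K : is_expansion num_l (gseq a) K.
Proof.
  eapply is_expansion_ext_pos;
    [| | exact (is_expansion_plus _ _ _ _ _ (is_expansion_one K) (is_expansion_profile_slope K))].
  - reflexivity.
  - intros j _. symmetry. apply gseq_eq.
Qed.

Lemma is_expansion_num_r K : is_expansion num_r (subst_opp (gseq a)) K.
Proof.
  eapply is_expansion_ext_pos;
    [| | exact (is_expansion_minus _ _ _ _ _ (is_expansion_one K) (is_expansion_profile_slope K))].
  - reflexivity.
  - intros j _. symmetry. apply subst_opp_gseq.
Qed.

Lemma is_expansion_den_l K : is_expansion den_l (hseq a) K.
Proof.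
  eapply is_expansion_ext_pos; [| | exact (is_expansion_plus _ _ _ _ _
    (is_expansion_minus _ _ _ _ _ (is_expansion_one K) (is_expansion_id K)) (is_expansion_profile K))].
  - reflexivity.
  - intros j _. symmetry. apply hseq_eq, sym_expansion_coef_0.
Qed.

Lemma is_expansion_den_r K : is_expansion den_r (subst_opp (hseq a)) K.
Proof.
  eapply is_expansion_ext_pos; [| | exact (is_expansion_plus _ _ _ _ _
    (is_expansion_plus _ _ _ _ _ (is_expansion_one K) (is_expansion_id K)) (is_expansion_profile K))].
  - reflexivity.
  - intros j _. symmetry. apply subst_opp_hseq, sym_expansion_coef_0.
Qed.

Lemma is_expansion_mean_l K : is_expansion mean_l (comp_coef a (/ 2) (gseq a) (hseq a)) K.
Proof.
  exact (is_expansion_comp _ _ _ _ _ _ _ K profile_even_expansion (gseq_0_pos a) (hseq_0_pos a)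
    (is_expansion_num_l K) (is_expansion_den_l K)).
Qed.

Lemma is_expansion_mean_r K : is_expansion mean_r (subst_opp (comp_coef a (/ 2) (gseq a) (hseq a))) K.
Proof.
  rewrite <- comp_coef_subst_opp by (apply gseq_0_pos || apply hseq_0_pos).
  apply is_expansion_comp; [exact profile_even_expansion | unfold subst_opp; simpl; lra
    | unfold subst_opp; simpl; lra | apply is_expansion_num_r | apply is_expansion_den_r].
Qed.

Lemma is_expansion_half_sum K : is_expansion half_sum (subst_sq (sseq a)) K.
Proof.
  eapply is_expansion_ext_pos; [| | exact (is_expansion_scal _ (/ 2) _ _
    (is_expansion_plus _ _ _ _ _ (is_expansion_mean_l K) (is_expansion_mean_r K)))].
  - reflexivity.
  - intros j _. unfold subst_opp. destruct (even_or_odd j) as [i [-> | ->]].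
    + rewrite pow_1_even, subst_sq_double, comp_coef_gh_even. field.
    + rewrite pow_1_odd, subst_sq_double_S. ring.
Qed.

Lemma is_expansion_half_diff K : is_expansion half_diff (subst_sq (dseq a)) K.
Proof.
  eapply is_expansion_ext_pos; [| | exact (proj2 (is_expansion_scal _ (/ 2) _ _
    (is_expansion_minus _ _ _ _ _ (is_expansion_mean_r (S K)) (is_expansion_mean_l (S K)))))].
  - intros u Hu. unfold half_diff, subst_opp. cbv beta. simpl pow. field. lra.
  - intros j _. unfold shift, subst_opp. destruct (even_or_odd j) as [i [-> | ->]].
    + rewrite pow_1_odd, subst_sq_double, comp_coef_gh_odd. field.
    + replace (S (S (2 * i))) with (2 * S i)%nat by lia. rewrite pow_1_even, subst_sq_double_S. ring.
Qed.

Lemma profile_pos u : 0 < u < 1 -> 0 < profile u.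
Proof. intros Hu. apply is_mean_pos; [exact Hmean | lra | lra]. Qed.

Lemma mean_l_eq u : 0 < u < 1 -> mean_l u = M (1 - u) (profile u).
Proof.
  intros Hu. generalize (profile_pos u Hu); intros Hf.
  rewrite (homogeneous_mean_eq M (1 - u) (profile u) Hhom) by lra.
  unfold mean_l, num_l, den_l.
  replace (u * (1 + (profile u - 1) / u) / (1 - u + profile u))
    with ((profile u - (1 - u)) / (1 - u + profile u)) by (field; lra).
  f_equal. field.
Qed.

Lemma mean_r_eq u : 0 < u < 1 -> mean_r u = M (profile u) (1 + u).
Proof.
  intros Hu. generalize (profile_pos u Hu); intros Hf.
  rewrite (homogeneous_mean_eq M (profile u) (1 + u) Hhom) by lra.
  unfold mean_r, num_r, den_r.
  replace (u * (1 - (profile u - 1) / u) / (1 + u + profile u))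
    with ((1 + u - profile u) / (profile u + (1 + u))) by (field; lra).
  f_equal. field.
Qed.

Lemma profile_stable u : 0 < u < 1 ->
  profile u = 1 * half_sum u * profile (u * half_diff u / half_sum u).
Proof.
  intros Hu. generalize (profile_pos u Hu); intros Hf.
  assert (HA : 0 < mean_l u) by (rewrite mean_l_eq by exact Hu; apply is_mean_pos; auto; lra).
  assert (HB : 0 < mean_r u) by (rewrite mean_r_eq by exact Hu; apply is_mean_pos; auto; lra).
  transitivity (M (mean_l u) (mean_r u)).
  - rewrite mean_l_eq, mean_r_eq by exact Hu. apply Hstab; lra.
  - rewrite (homogeneous_mean_eq M _ _ Hhom HA HB). unfold half_sum, half_diff.
    replace (u * (/ 2 * (mean_r u - mean_l u) / u) / (/ 2 * (mean_l u + mean_r u)))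
      with ((mean_r u - mean_l u) / (mean_l u + mean_r u)) by (field; lra).
    f_equal. field.
Qed.

Lemma stable_coef_identity m :
  a m = sumR (S m) (fun n => a n * cross_pow (dseq a) (sseq a) n (m - n)).
Proof.
  assert (Hd : 0 < dseq a O) by (rewrite dseq_0 by exact sym_expansion_coef_0; lra).
  assert (Hs : 0 < sseq a O) by (rewrite sseq_0 by exact sym_expansion_coef_0; lra).
  assert (X : is_expansion profile (comp_coef a 1 (subst_sq (dseq a)) (subst_sq (sseq a))) (2 * m)).
  { eapply is_expansion_ext;
      [apply at_right_0_of_unit; intros u Hu; symmetry; apply profile_stable, Hu | reflexivity |].
    apply is_expansion_comp; [exact profile_even_expansion | exact Hd | exact Hs
      | apply is_expansion_half_diff | apply is_expansion_half_sum]. }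
  rewrite <- comp_coef_subst_sq by assumption. rewrite <- (subst_sq_double a m).
  exact (is_expansion_unique _ _ _ _ (is_expansion_profile _) X _ (le_n _)).
Qed.

End StableMean.

(** * Solving the coefficient identity for [a m] *)

Lemma sumR_cross_pow_ends a x y m (e : nat -> nat) : 0 < x O -> 0 < y O -> (1 <= m)%nat -> e m = O ->
  sumR (S m) (fun n => a n * cross_pow x y n (e n)) =
  a O * y (e O) + sumR (m - 1) (fun j => a (S j) * cross_pow x y (S j) (e (S j)))
  + a m * (Rpower (x O) (2 * INR m) * Rpower (y O) (- 2 * INR m + 1)).
Proof.
  intros Hx Hy Hm Hem. rewrite sumR_first_last by exact Hm. unfold cross_pow at 1 3.
  replace (2 * INR 0) with 0 by (simpl; ring). replace (- 2 * INR 0 + 1) with 1 by (simpl; ring).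
  rewrite P_zero_exponent, P_one_exponent, conv_delta_l, Hem, conv_0 by assumption. reflexivity.
Qed.

Lemma hseq_double a m : (1 <= m)%nat -> hseq a (2 * m) = a m.
Proof.
  intros Hm. replace (2 * m)%nat with (S (S (2 * (m - 1)))) by lia. unfold hseq.
  cbn [Nat.even Nat.div2]. rewrite Nat.even_mul, Nat.div2_double. simpl. f_equal. lia.
Qed.

Lemma Rpower_double_nat x m : 0 < x -> Rpower x (2 * INR m) = x ^ (2 * m).
Proof. intros Hx. rewrite <- Rpower_pow by exact Hx. rewrite mult_INR. reflexivity. Qed.

Lemma sseq_ends a m : a O = 1 -> (1 <= m)%nat ->
  sseq a m = / 2 * (a m
    + sumR (m - 1) (fun j => a (S j) * cross_pow (gseq a) (hseq a) (S j) (2 * m - 2 * S j))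
    + 2 * a m / 2 ^ (2 * m)).
Proof.
  intros Ha Hm.
  change (sseq a m)
    with (/ 2 * sumR (S m) (fun n => a n * cross_pow (gseq a) (hseq a) n (2 * m - 2 * n))).
  rewrite (sumR_cross_pow_ends _ _ _ _ (fun n => 2 * m - 2 * n)%nat) by (simpl; lra || lia). cbv beta.
  rewrite Nat.sub_0_r, hseq_double, Ha by lia. change (gseq a O) with 1. change (hseq a O) with 2.
  replace (- 2 * INR m + 1) with (- (2 * INR m) + 1) by ring.
  rewrite Rpower_1_l, Rpower_plus, Rpower_Ropp, Rpower_double_nat, Rpower_1 by lra.
  unfold Rdiv. ring.
Qed.

Lemma stable_sum_ends a m : a O = 1 -> (1 <= m)%nat ->
  sumR (S m) (fun n => a n * cross_pow (dseq a) (sseq a) n (m - n)) =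
  sseq a m + sumR (m - 1) (fun j => a (S j) * cross_pow (dseq a) (sseq a) (S j) (m - S j))
  + a m / 2 ^ (2 * m).
Proof.
  intros Ha Hm. assert (Hd := dseq_0 a Ha). assert (Hs := sseq_0 a Ha).
  rewrite (sumR_cross_pow_ends a (dseq a) (sseq a) m (fun n => m - n)%nat) by (lra || lia). cbv beta.
  rewrite Nat.sub_0_r, Hd, Hs, Ha, Rpower_1_l, Rpower_double_nat, pow_inv by lra.
  unfold Rdiv. ring.
Qed.

Lemma stable_recursion_solve a m : a O = 1 -> (2 <= m)%nat ->
  a m = sumR (S m) (fun n => a n * cross_pow (dseq a) (sseq a) n (m - n)) ->
  a m = 2 ^ (2 * m - 1) / (2 ^ (2 * m - 2) - 1) *
    (/ 2 * sumR (m - 1) (fun j => a (S j) * cross_pow (gseq a) (hseq a) (S j) (2 * m - 2 * S j))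
     + sumR (m - 1) (fun j => a (S j) * cross_pow (dseq a) (sseq a) (S j) (m - S j))).
Proof.
  intros Ha Hm E.
  rewrite stable_sum_ends, sseq_ends in E by (exact Ha || lia).
  assert (Hp : 16 <= 2 ^ (2 * m)).
  { replace 16 with (2 ^ 4) by (simpl; ring). apply Rle_pow; [lra | lia]. }
  replace (2 ^ (2 * m - 1)) with (2 ^ (2 * m) / 2)
    by (replace (2 * m)%nat with (S (2 * m - 1)) at 1 by lia; simpl; field).
  replace (2 ^ (2 * m - 2)) with (2 ^ (2 * m) / 4)
    by (replace (2 * m)%nat with (2 + (2 * m - 2))%nat at 1 by lia; rewrite pow_add; simpl; field).
  (* the goal's difference is a multiple of [a m - rhs], which vanishes by [E] *)
  apply Rminus_diag_uniq.
  match type of E with _ = ?rhs =>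
    transitivity (2 * 2 ^ (2 * m) / (2 ^ (2 * m) - 4) * (a m - rhs)); [field; lra|] end.
  rewrite <- E. ring.
Qed.

Theorem theorem3p2 (M : R -> R -> R) (a : nat -> R) :
  is_mean M -> symmetric_mean M -> homogeneous_mean M -> stable_mean M ->
  has_sym_asymp_expansion M a ->
  a 0%nat = 1 /\
  forall m : nat, (2 <= m)%nat ->
    a m = 2 ^ (2 * m - 1) / (2 ^ (2 * m - 2) - 1) *
      ( / 2 * sum_range 1 (m - 1) (fun n => a n *
            sum_range 0 (2 * m - 2 * n) (fun k =>
              P k (2 * INR n) (gseq a) * P (2 * m - 2 * n - k) (- 2 * INR n + 1) (hseq a)))
        + sum_range 1 (m - 1) (fun n => a n *
            sum_range 0 (m - n) (fun k =>
              P k (2 * INR n) (dseq a) * P (m - n - k) (- 2 * INR n + 1) (sseq a)))).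
Proof.
  intros Hmean _ Hhom Hstab Hexp.
  assert (Ha0 := sym_expansion_coef_0 M a Hmean Hexp).
  split; [exact Ha0|]. intros m Hm. rewrite !sum_range_1.
  exact (stable_recursion_solve a m Ha0 Hm (stable_coef_identity M a Hmean Hhom Hstab Hexp m)).
Qed.
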